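(* Let $Q$ be an irreducible transition matrix on a finite set $\Sigma\subset\mathbb{R}$ with invariant distribution $\mu$, let $\gamma\in(0,1)$, and for each $N$ let $\mathbb{P}^{(N)}$ be the law of the Markov chain $\omega=(\omega_n)_{n\ge0}$ on $\Sigma$ with transition matrix $Q^{(N)}=\mathrm{Id}+N^{-\gamma}(Q-\mathrm{Id})$ started from $\mu$ (which is invariant for $Q^{(N)}$). Then for all $\beta\ge0$, $h\in\mathbb{R}$, $$\mathbb{E}^{(N)}\Big[\frac1N\log Z_{N,\beta,h,\omega}\Big]\xrightarrow[N\to\infty]{}\sum_{x\in\Sigma}\mu(x)F(h+\beta x).$$
   Context: $\tau$ is a renewal process with $\tau_0=0$ and interarrival law $K(n)=L(n)n^{-(1+\alpha)}$, $n\ge1$, with $\alpha\ge0$, $L$ positive slowly varying, $\sum_nK(n)=1$; $\delta_n=\mathbf 1_{\{n\in\tau\}}$; $E$ is expectation over $\tau$, and $\omega$ is independent of $\tau$. $Z_{N,\beta,h,\omega}=E\big[\exp\big(\sum_{n=1}^N(\beta\omega_n+h)\delta_n\big)\delta_N\big]$. $F(h):=\lim_{N}\frac1N\log E[\exp(h\sum_{n=1}^N\delta_n)\delta_N]$ is the homogeneous free energy (nonnegative, zero iff $h\le0$). $\mathbb{E}^{(N)}$ is expectation under $\mathbb{P}^{(N)}$. *)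

From Stdlib Require Import Reals List Lra.
Import ListNotations.
Open Scope R_scope.

Definition sumn (n : nat) (f : nat -> R) : R :=
  fold_right Rplus 0 (map f (seq 0 n)).

Definition slowly_varying (L : R -> R) : Prop :=
  (forall x, 0 < x -> 0 < L x) /\
  (forall c, 0 < c ->
     forall eps, 0 < eps -> exists M, forall x, M < x -> Rabs (L (c * x) / L x - 1) < eps).

Definition Kfun (L : R -> R) (alpha : R) (n : nat) : R :=
  L (INR n) * Rpower (INR n) (- (1 + alpha)).

(* Partition functions E[exp(sum_{n=1}^N w_n delta_n) delta_N], for the
   renewal tau with tau_0 = 0 and interarrival law K, computed by the
   renewal (first-decomposition at the last renewal before N) recursion. *)
Fixpoint Zlist (K : nat -> R) (w : nat -> R) (N : nat) : list R :=
  match N with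
  | O => [1]
  | S n => let l := Zlist K w n in
           l ++ [sumn (S n) (fun j => nth j l 0 * K (S n - j)%nat) * exp (w (S n))]
  end.

Definition Zpart (K : nat -> R) (w : nat -> R) (N : nat) : R :=
  nth N (Zlist K w N) 0.

Definition Z_N (K : nat -> R) (beta h : R) (omega : nat -> R) (N : nat) : R :=
  Zpart K (fun n => beta * omega n + h) N.

Definition Zhom (K : nat -> R) (h : R) (N : nat) : R :=
  Zpart K (fun _ => h) N.

Definition stochastic (m : nat) (Q : nat -> nat -> R) : Prop :=
  (forall i j, (i < m)%nat -> (j < m)%nat -> 0 <= Q i j) /\
  (forall i, (i < m)%nat -> sumn m (fun j => Q i j) = 1).

Fixpoint matpow (m : nat) (Q : nat -> nat -> R) (n : nat) : nat -> nat -> R :=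
  match n with
  | O => fun i j => if Nat.eqb i j then 1 else 0
  | S k => fun i j => sumn m (fun l => matpow m Q k i l * Q l j)
  end.

Definition irreducible (m : nat) (Q : nat -> nat -> R) : Prop :=
  forall i j, (i < m)%nat -> (j < m)%nat -> exists n, 0 < matpow m Q n i j.

Definition invariant_distribution (m : nat) (Q : nat -> nat -> R) (mu : nat -> R) : Prop :=
  (forall i, (i < m)%nat -> 0 <= mu i) /\
  sumn m mu = 1 /\
  (forall j, (j < m)%nat -> sumn m (fun i => mu i * Q i j) = mu j).

Definition QN (Q : nat -> nat -> R) (gamma : R) (N : nat) : nat -> nat -> R :=
  fun i j => (if Nat.eqb i j then 1 else 0)
             + Rpower (INR N) (- gamma) * (Q i j - (if Nat.eqb i j then 1 else 0)).

Fixpoint paths (m n : nat) : list (list nat) :=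
  match n with
  | O => [[]]
  | S k => flat_map (fun p => map (fun i => p ++ [i]) (seq 0 m)) (paths m k)
  end.

Fixpoint path_weight_from (P : nat -> nat -> R) (prev : nat) (p : list nat) : R :=
  match p with
  | [] => 1
  | i :: q => P prev i * path_weight_from P i q
  end.

Definition path_weight (mu : nat -> R) (P : nat -> nat -> R) (p : list nat) : R :=
  match p with
  | [] => 1
  | i0 :: q => mu i0 * path_weight_from P i0 q
  end.

(* Expectation of G(omega_0, ..., omega_N) for the Markov chain on Sigma
   (omega_n = x i_n) started from mu with transition matrix P. *)
Definition markov_expect (m : nat) (x : nat -> R) (mu : nat -> R)
    (P : nat -> nat -> R) (N : nat) (G : (nat -> R) -> R) : R :=
  fold_right Rplus 0
    (map (fun p => path_weight mu P p * G (fun n => x (nth n p 0%nat)))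
         (paths m (S N))).

From Stdlib Require Import Reals List Lra Lia Arith Wf_nat.
Import ListNotations.
Open Scope R_scope.

(** Write [c_i = beta x_i + h]. For a fixed environment, [ln Z_N] equals the
    sum of the homogeneous free energies [F (c_(omega_n))], [1 <= n <= N], up to
    an error [eps N + D (1 + number of switches of omega)]: the lower bound comes
    from super-multiplicativity of [Z] at the last switch, the upper bound from
    the renewal recursion and [sum_k K(k) e^(c - F(c) k) <= 1], which follows
    from the definition of [F] as a growth rate. Under [P^(N)] the chain is
    stationary, so that sum has expectation [N sum_i mu(i) F(c_i)], while the
    expected number of switches is at most [N^(1 - gamma)]. *)

Lemma exp_le_compat : forall a b, a <= b -> exp a <= exp b.
Proof. intros a b [H|H]; [left; apply exp_increasing; auto | subst; lra]. Qed.

Lemma ln_le_compat : forall a b, 0 < a -> a <= b -> ln a <= ln b.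
Proof. intros a b Ha [H|H]; [left; apply ln_increasing; auto | subst; lra]. Qed.

Lemma Un_cv_between : forall u l eps, Un_cv u l -> 0 < eps ->
  exists N, forall n, (n >= N)%nat -> l - eps < u n < l + eps.
Proof.
  intros u l eps H He. destruct (H eps He) as [N HN]. exists N. intros n Hn.
  specialize (HN n Hn). unfold R_dist in HN. apply Rabs_def2 in HN. lra.
Qed.

Lemma fold_right_Rplus_app : forall (A : Type) (g : A -> R) l1 l2,
  fold_right Rplus 0 (map g (l1 ++ l2))
  = fold_right Rplus 0 (map g l1) + fold_right Rplus 0 (map g l2).
Proof. intros A g l1 l2; induction l1; simpl; [lra | rewrite IHl1; lra]. Qed.

Lemma sumn_0 : forall f, sumn 0 f = 0.
Proof. reflexivity. Qed.

Lemma sumn_S : forall n f, sumn (S n) f = sumn n f + f n.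
Proof. intros n f; unfold sumn; rewrite seq_S, fold_right_Rplus_app; simpl; lra. Qed.

Lemma sumn_ext : forall n f g, (forall i, (i < n)%nat -> f i = g i) -> sumn n f = sumn n g.
Proof. induction n; intros f g H; [reflexivity|]. rewrite !sumn_S, (IHn f g), H; auto; lia. Qed.

Lemma sumn_le_compat : forall n f g,
  (forall i, (i < n)%nat -> f i <= g i) -> sumn n f <= sumn n g.
Proof.
  induction n; intros f g H; [rewrite !sumn_0; lra|]. rewrite !sumn_S.
  assert (f n <= g n) by (apply H; lia).
  assert (sumn n f <= sumn n g) by (apply IHn; intros; apply H; lia). lra.
Qed.

Lemma sumn_const : forall n c, sumn n (fun _ => c) = INR n * c.
Proof. induction n; intros; [rewrite sumn_0; simpl; lra | rewrite sumn_S, IHn, S_INR; lra]. Qed.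

Lemma sumn_nonneg : forall n f, (forall i, (i < n)%nat -> 0 <= f i) -> 0 <= sumn n f.
Proof.
  intros n f H. replace 0 with (sumn n (fun _ => 0)) by (rewrite sumn_const; ring).
  apply sumn_le_compat; auto.
Qed.

Lemma sumn_add : forall n f g, sumn n (fun i => f i + g i) = sumn n f + sumn n g.
Proof. induction n; intros; [rewrite !sumn_0; lra | rewrite !sumn_S, IHn; lra]. Qed.

Lemma sumn_scal : forall n c f, sumn n (fun i => c * f i) = c * sumn n f.
Proof. induction n; intros; [rewrite !sumn_0; lra | rewrite !sumn_S, IHn; lra]. Qed.

Lemma sumn_Sl : forall n f, sumn (S n) f = f 0%nat + sumn n (fun k => f (S k)).
Proof.
  induction n; intros f; [rewrite sumn_S, !sumn_0; lra|].
  rewrite sumn_S, IHn, (sumn_S n); lra.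
Qed.

Lemma sumn_add_range : forall a b f,
  sumn (a + b) f = sumn a f + sumn b (fun k => f (a + k)%nat).
Proof.
  intros a b f; induction b; [rewrite Nat.add_0_r, sumn_0; lra|].
  rewrite Nat.add_succ_r, !sumn_S, IHb; lra.
Qed.

Lemma sumn_swap : forall n p (a : nat -> nat -> R),
  sumn n (fun j => sumn p (fun i => a j i)) = sumn p (fun i => sumn n (fun j => a j i)).
Proof.
  induction n; intros p a.
  - rewrite sumn_0, (sumn_ext p _ (fun _ => 0)), sumn_const by (intros; apply sumn_0). ring.
  - rewrite sumn_S, IHn, <- sumn_add. apply sumn_ext; intros; rewrite sumn_S; reflexivity.
Qed.

Lemma sumn_term_le : forall n f k,
  (forall i, (i < n)%nat -> 0 <= f i) -> (k < n)%nat -> f k <= sumn n f.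
Proof.
  induction n; intros f k H Hk; [lia|]. rewrite sumn_S.
  assert (0 <= f n) by (apply H; lia).
  destruct (Nat.eq_dec k n) as [->|Hkn].
  - assert (0 <= sumn n f) by (apply sumn_nonneg; intros; apply H; lia). lra.
  - assert (f k <= sumn n f) by (apply IHn; [intros; apply H | ]; lia). lra.
Qed.

Lemma sumn_indicator : forall m j (g : nat -> R), (j < m)%nat ->
  sumn m (fun i => g i * (if Nat.eqb i j then 1 else 0)) = g j.
Proof.
  induction m; intros j g Hj; [lia|]. rewrite sumn_S.
  destruct (Nat.eq_dec j m) as [->|Hjm].
  - rewrite Nat.eqb_refl, (sumn_ext m _ (fun _ => 0)), sumn_const; [ring|].
    intros i Hi; destruct (Nat.eqb_spec i m); [lia | ring].
  - rewrite IHm by lia. destruct (Nat.eqb_spec m j); [lia | ring].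
Qed.

Lemma sumn_delta : forall m i, (i < m)%nat -> sumn m (fun j => if Nat.eqb i j then 1 else 0) = 1.
Proof.
  intros m i Hi.
  rewrite (sumn_ext m _ (fun j => 1 * (if Nat.eqb j i then 1 else 0))).
  - apply (sumn_indicator m i (fun _ => 1) Hi).
  - intros j _. destruct (Nat.eqb_spec i j), (Nat.eqb_spec j i); [ring | lia | lia | ring].
Qed.

Lemma sumn_rev : forall n g, sumn n (fun k => g (n - k)%nat) = sumn n (fun k => g (S k)).
Proof.
  induction n; intros g; [reflexivity|].
  rewrite sumn_S, sumn_Sl, <- (IHn (fun j => g (S j))).
  replace (S n - n)%nat with 1%nat by lia.
  rewrite (sumn_ext n (fun k => g (S n - k)%nat) (fun k => g (S (n - k)))); [lra|].
  intros; f_equal; lia.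
Qed.

(** * The renewal recursion *)

Lemma Zlist_length : forall K w n, length (Zlist K w n) = S n.
Proof. intros K w n; induction n; simpl; auto. rewrite length_app, IHn; simpl; lia. Qed.

Lemma Zlist_nth : forall K w n j, (j <= n)%nat -> nth j (Zlist K w n) 0 = Zpart K w j.
Proof.
  intros K w n; induction n; intros j Hj.
  - replace j with 0%nat by lia. reflexivity.
  - destruct (Nat.eq_dec j (S n)) as [->|Hjn]; [reflexivity|].
    simpl. rewrite app_nth1 by (rewrite Zlist_length; lia). apply IHn; lia.
Qed.

Lemma Zpart_0 : forall K w, Zpart K w 0 = 1.
Proof. reflexivity. Qed.

Lemma Zpart_S : forall K w n,
  Zpart K w (S n) = sumn (S n) (fun j => Zpart K w j * K (S n - j)%nat) * exp (w (S n)).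
Proof.
  intros K w n. unfold Zpart at 1. simpl.
  rewrite app_nth2 by (rewrite Zlist_length; lia). rewrite Zlist_length, Nat.sub_diag. simpl.
  f_equal. apply sumn_ext. intros i Hi. rewrite Zlist_nth by lia. reflexivity.
Qed.

Lemma Zpart_ext : forall K w w' N, (forall k, (1 <= k <= N)%nat -> w k = w' k) ->
  forall n, (n <= N)%nat -> Zpart K w n = Zpart K w' n.
Proof.
  intros K w w' N H. induction n as [n IH] using lt_wf_ind. intros Hn.
  destruct n; [reflexivity|].
  rewrite !Zpart_S, (H (S n)) by lia. f_equal.
  apply sumn_ext. intros i Hi. rewrite IH; auto; lia.
Qed.

Definition Kpos (K : nat -> R) := forall n, (1 <= n)%nat -> 0 < K n.

Section PositiveKernel.
Variable K : nat -> R.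
Hypothesis HK : Kpos K.

Lemma Zpart_pos : forall w n, 0 < Zpart K w n.
Proof.
  intros w. induction n as [n IH] using lt_wf_ind.
  destruct n; [rewrite Zpart_0; lra|].
  rewrite Zpart_S, sumn_S. apply Rmult_lt_0_compat; [|apply exp_pos].
  assert (0 <= sumn n (fun j => Zpart K w j * K (S n - j)%nat)).
  { apply sumn_nonneg; intros i Hi.
    apply Rmult_le_pos; [left; apply IH | left; apply HK]; lia. }
  assert (0 < Zpart K w n * K (S n - n)%nat) by (apply Rmult_lt_0_compat; [apply IH | apply HK]; lia).
  lra.
Qed.

Lemma Zpart_ge_last_term : forall w n,
  Zpart K w n * K 1%nat * exp (w (S n)) <= Zpart K w (S n).
Proof.
  intros w n. rewrite Zpart_S, sumn_S. replace (S n - n)%nat with 1%nat by lia.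
  assert (0 <= sumn n (fun j => Zpart K w j * K (S n - j)%nat)).
  { apply sumn_nonneg; intros i Hi. apply Rmult_le_pos; [left; apply Zpart_pos | left; apply HK; lia]. }
  assert (0 < exp (w (S n))) by apply exp_pos.
  rewrite Rmult_plus_distr_r. nra.
Qed.

(* Restricting to renewal configurations with a renewal at [a]. *)
Lemma Zpart_supermult : forall w a l,
  Zpart K w a * Zpart K (fun n => w (a + n)%nat) l <= Zpart K w (a + l).
Proof.
  intros w a. induction l as [l IH] using lt_wf_ind.
  destruct l; [rewrite Nat.add_0_r, Zpart_0; lra|].
  rewrite Nat.add_succ_r, !Zpart_S, <- Nat.add_succ_r, sumn_add_range.
  assert (0 <= sumn a (fun j => Zpart K w j * K (a + S l - j)%nat)).
  { apply sumn_nonneg; intros i Hi. apply Rmult_le_pos; [left; apply Zpart_pos | left; apply HK; lia]. }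
  assert (Hterms : Zpart K w a * sumn (S l) (fun k => Zpart K (fun n => w (a + n)%nat) k * K (S l - k)%nat)
          <= sumn (S l) (fun k => Zpart K w (a + k) * K (a + S l - (a + k))%nat)).
  { rewrite <- sumn_scal. apply sumn_le_compat. intros i Hi.
    replace (a + S l - (a + i))%nat with (S l - i)%nat by lia.
    rewrite <- Rmult_assoc. apply Rmult_le_compat_r; [left; apply HK; lia|].
    destruct (Nat.eq_dec i 0) as [->|]; [rewrite Nat.add_0_r, Zpart_0; lra|].
    apply IH; lia. }
  assert (0 < exp (w (a + S l)%nat)) by apply exp_pos. nra.
Qed.

End PositiveKernel.

(** * The homogeneous free energy *)

Definition renewal_series (K : nat -> R) (c t : R) (M : nat) : R :=
  sumn M (fun k => K (S k) * exp (c - t * INR (S k))).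

Lemma finite_min_pos : forall (y : nat -> R) M, (forall j, (j < M)%nat -> 0 < y j) ->
  exists y0, 0 < y0 /\ forall j, (j < M)%nat -> y0 <= y j.
Proof.
  intros y M; induction M; intros H; [exists 1; split; [lra | intros; lia]|].
  destruct IHM as [y0 [Hy0 Hmin]]; [intros; apply H; lia|].
  exists (Rmin y0 (y M)). split; [apply Rmin_pos; auto; apply H; lia|].
  intros j Hj. destruct (Nat.eq_dec j M) as [->|]; [apply Rmin_r|].
  eapply Rle_trans; [apply Rmin_l | apply Hmin; lia].
Qed.

Section Homogeneous.
Variable K : nat -> R.
Hypothesis HK : Kpos K.
Variable c : R.

Lemma renewal_series_shift : forall f d M, 0 <= d ->
  exp (- (d * INR M)) * renewal_series K c f M <= renewal_series K c (f + d) M.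
Proof.
  intros f d M Hd. unfold renewal_series. rewrite <- sumn_scal. apply sumn_le_compat.
  intros k Hk. assert (0 < K (S k)) by (apply HK; lia).
  rewrite Rmult_comm, Rmult_assoc. apply Rmult_le_compat_l; [lra|].
  rewrite <- exp_plus. apply exp_le_compat.
  assert (INR (S k) <= INR M) by (apply le_INR; lia). nra.
Qed.

Lemma Zhom_ge_recent : forall M n, (M <= n)%nat ->
  exp c * sumn (S M) (fun k => Zhom K c (S n - S M + k) * K (S M - k)%nat) <= Zhom K c (S n).
Proof.
  intros M n HMn. unfold Zhom. rewrite (Zpart_S K (fun _ => c) n).
  replace (sumn (S n)) with (sumn ((S n - S M) + S M)) by (f_equal; lia).
  rewrite sumn_add_range.
  assert (0 <= sumn (S n - S M) (fun j => Zpart K (fun _ => c) j * K (S n - j)%nat)).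
  { apply sumn_nonneg; intros i Hi.
    apply Rmult_le_pos; [left; apply (Zpart_pos K HK) | left; apply HK; lia]. }
  rewrite (sumn_ext (S M) (fun k => Zpart K (fun _ => c) (S n - S M + k) * K (S n - (S n - S M + k))%nat)
             (fun k => Zpart K (fun _ => c) (S n - S M + k) * K (S M - k)%nat))
    by (intros k Hk; do 2 f_equal; lia).
  assert (0 < exp c) by apply exp_pos. nra.
Qed.

Lemma renewal_series_window : forall t M n, (M <= n)%nat ->
  exp (t * INR (S n)) * renewal_series K c t (S M)
  = exp c * sumn (S M) (fun k => exp (t * INR (S n - S M + k)) * K (S M - k)%nat).
Proof.
  intros t M n HMn. unfold renewal_series.
  rewrite <- (sumn_rev (S M) (fun j => K j * exp (c - t * INR j))), <- !sumn_scal.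
  apply sumn_ext. intros k Hk.
  replace (t * INR (S n)) with (t * INR (S n - S M + k) + t * INR (S M - k))
    by (rewrite <- Rmult_plus_distr_l, <- plus_INR; do 2 f_equal; lia).
  unfold Rminus. rewrite !exp_plus, exp_Ropp.
  assert (0 < exp (t * INR (S M - k))) by apply exp_pos. field. lra.
Qed.

(* If the series at rate [t] reaches 1, the renewal recursion restricted to the
   last [M] steps propagates [y0 e^(t N) <= Zhom N] from [N <= M] to all [N]. *)
Lemma Zhom_exp_lower : forall t M, 1 <= renewal_series K c t M ->
  exists y0, 0 < y0 /\ forall N, y0 * exp (t * INR N) <= Zhom K c N.
Proof.
  intros t M Hser. destruct M as [|M]; [unfold renewal_series in Hser; rewrite sumn_0 in Hser; lra|].
  destruct (finite_min_pos (fun j => Zhom K c j * exp (- (t * INR j))) (S M)) as [y0 [Hy0 Hmin]].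
  { intros j _. apply Rmult_lt_0_compat; [apply (Zpart_pos K HK) | apply exp_pos]. }
  exists y0. split; auto.
  induction N as [N IH] using lt_wf_ind.
  destruct (lt_dec N (S M)) as [HN|HN].
  - specialize (Hmin N HN). rewrite exp_Ropp in Hmin.
    assert (0 < exp (t * INR N)) by apply exp_pos.
    apply Rmult_le_compat_r with (r := exp (t * INR N)) in Hmin; [|lra].
    replace (Zhom K c N * / exp (t * INR N) * exp (t * INR N)) with (Zhom K c N) in Hmin
      by (field; lra). exact Hmin.
  - destruct N as [|n]; [lia|].
    assert (Hwin := renewal_series_window t M n ltac:(lia)).
    assert (Hrec := Zhom_ge_recent M n ltac:(lia)).
    assert (Hstep : y0 * sumn (S M) (fun k => exp (t * INR (S n - S M + k)) * K (S M - k)%nat)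
                    <= sumn (S M) (fun k => Zhom K c (S n - S M + k) * K (S M - k)%nat)).
    { rewrite <- sumn_scal. apply sumn_le_compat. intros k Hk.
      assert (0 < K (S M - k)%nat) by (apply HK; lia).
      assert (IHk := IH (S n - S M + k)%nat ltac:(lia)). nra. }
    assert (0 < exp c) by apply exp_pos.
    assert (0 < y0 * exp (t * INR (S n))) by (apply Rmult_lt_0_compat; [lra | apply exp_pos]).
    apply Rle_trans with (y0 * (exp (t * INR (S n)) * renewal_series K c t (S M))); [nra|].
    rewrite Hwin. nra.
Qed.

Variable Fc : R.
Hypothesis Hcv : Un_cv (fun N => ln (Zhom K c N) / INR N) Fc.

Lemma exp_rate_le_limit : forall t y0, 0 < y0 ->
  (forall N, y0 * exp (t * INR N) <= Zhom K c N) -> t <= Fc.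
Proof.
  intros t y0 Hy0 Hlow. destruct (Rle_dec t Fc) as [|Hlt]; [auto|]. exfalso.
  apply Rnot_le_lt in Hlt. set (d := t - Fc).
  destruct (Un_cv_between _ _ (d / 2) Hcv) as [N1 HN1]; [unfold d; lra|].
  destruct (INR_unbounded (2 * Rabs (ln y0) / d)) as [N2 HN2].
  set (N := (N1 + N2 + 1)%nat).
  specialize (HN1 N ltac:(unfold N; lia)).
  assert (HNpos : 0 < INR N) by (apply lt_0_INR; unfold N; lia).
  assert (INR N2 <= INR N) by (apply le_INR; unfold N; lia).
  assert (Hln : ln y0 + t * INR N <= ln (Zhom K c N)).
  { rewrite <- (ln_exp (t * INR N)), <- ln_mult by (auto; apply exp_pos).
    apply ln_le_compat; [apply Rmult_lt_0_compat; [lra | apply exp_pos] | apply Hlow]. }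
  assert (Hbig : 2 * Rabs (ln y0) < d * INR N).
  { assert (2 * Rabs (ln y0) / d * d = 2 * Rabs (ln y0)) by (field; unfold d; lra).
    assert (0 < d) by (unfold d; lra). nra. }
  assert (- Rabs (ln y0) <= ln y0) by (pose proof (Rle_abs (- ln y0)); rewrite Rabs_Ropp in *; lra).
  assert (Hup : ln (Zhom K c N) / INR N * INR N < (Fc + d / 2) * INR N)
    by (apply Rmult_lt_compat_r; lra).
  replace (ln (Zhom K c N) / INR N * INR N) with (ln (Zhom K c N)) in Hup by (field; lra).
  unfold d in *. lra.
Qed.

Lemma renewal_series_le_1 : forall M, renewal_series K c Fc M <= 1.
Proof.
  intros M. destruct (Rle_dec (renewal_series K c Fc M) 1) as [|Hg]; [auto|]. exfalso.
  apply Rnot_le_lt in Hg. set (g := renewal_series K c Fc M) in *.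
  destruct M as [|M]; [unfold g, renewal_series in Hg; rewrite sumn_0 in Hg; lra|].
  assert (HM : 0 < INR (S M)) by (apply lt_0_INR; lia).
  assert (Hlg : 0 < ln g) by (rewrite <- ln_1; apply ln_increasing; lra).
  set (d := ln g / INR (S M)).
  assert (Hd : 0 < d) by (apply Rdiv_lt_0_compat; lra).
  assert (Hreach : 1 <= renewal_series K c (Fc + d) (S M)).
  { eapply Rle_trans; [|apply renewal_series_shift; lra].
    replace (d * INR (S M)) with (ln g) by (unfold d; field; lra).
    rewrite exp_Ropp, exp_ln by lra. fold g. right; field; lra. }
  destruct (Zhom_exp_lower _ _ Hreach) as [y0 [Hy0 Hlow]].
  assert (Fc + d <= Fc) by (apply (exp_rate_le_limit _ y0); auto). lra.
Qed.

Lemma Zhom_ln_lower_linear : forall l, INR l * (ln (K 1%nat) + c) <= ln (Zhom K c l).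
Proof.
  induction l; [unfold Zhom; rewrite Zpart_0, ln_1; simpl; lra|].
  assert (Hstep := Zpart_ge_last_term K HK (fun _ => c) l). fold (Zhom K c) in Hstep.
  assert (0 < Zhom K c l) by (apply (Zpart_pos K HK)).
  assert (0 < K 1%nat) by (apply HK; lia).
  apply Rle_trans with (ln (Zhom K c l * K 1%nat * exp c)).
  - rewrite !ln_mult, ln_exp by (try apply Rmult_lt_0_compat; auto; apply exp_pos).
    rewrite S_INR. lra.
  - apply ln_le_compat; [|exact Hstep].
    apply Rmult_lt_0_compat; [apply Rmult_lt_0_compat | apply exp_pos]; auto.
Qed.

Lemma Zhom_ln_lower : forall eps, 0 < eps -> exists D, 0 <= D /\
  forall l, (1 <= l)%nat -> INR l * (Fc - eps) - D <= ln (Zhom K c l).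
Proof.
  intros eps He. destruct (Un_cv_between _ _ eps Hcv He) as [N0 HN0].
  set (a := Rabs (Fc - eps - ln (K 1%nat) - c)).
  assert (Ha : 0 <= a) by apply Rabs_pos.
  exists (INR N0 * a). split; [apply Rmult_le_pos; [apply pos_INR | auto]|].
  intros l Hl. assert (0 <= INR N0 * a) by (apply Rmult_le_pos; [apply pos_INR | auto]).
  destruct (le_lt_dec N0 l) as [HlN|HlN].
  - specialize (HN0 l HlN). assert (0 < INR l) by (apply lt_0_INR; lia).
    assert (ln (Zhom K c l) = ln (Zhom K c l) / INR l * INR l) by (field; lra). nra.
  - assert (Hlin := Zhom_ln_lower_linear l).
    assert (INR l <= INR N0) by (apply le_INR; lia).
    assert (Fc - eps - ln (K 1%nat) - c <= a) by apply Rle_abs.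
    assert (0 <= INR l) by apply pos_INR. nra.
Qed.

End Homogeneous.

Lemma Kfun_pos : forall L alpha, slowly_varying L -> Kpos (Kfun L alpha).
Proof.
  intros L alpha [HL _] n Hn. unfold Kfun. apply Rmult_lt_0_compat.
  - apply HL, lt_0_INR; lia.
  - unfold Rpower; apply exp_pos.
Qed.

Lemma Kfun_doubling : forall L alpha, slowly_varying L -> exists rho M0, 0 < rho /\
  forall n, (1 <= n)%nat -> M0 < INR n -> rho * Kfun L alpha n <= Kfun L alpha (2 * n).
Proof.
  intros L alpha [HLpos HLsv].
  destruct (HLsv 2 ltac:(lra) (1/2) ltac:(lra)) as [M0 HM0].
  set (p := Rpower 2 (- (1 + alpha))).
  assert (Hp : 0 < p) by (unfold p, Rpower; apply exp_pos).
  exists (p / 2), M0. split; [lra|]. intros n Hn HnM.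
  assert (Hx : 0 < INR n) by (apply lt_0_INR; lia).
  unfold Kfun. rewrite mult_INR. replace (INR 2) with 2 by (simpl; lra).
  rewrite <- Rpower_mult_distr by lra. fold p.
  specialize (HM0 (INR n) HnM). apply Rabs_def2 in HM0. destruct HM0 as [_ HM0].
  assert (HLn : 0 < L (INR n)) by auto.
  assert (Hhalf : L (INR n) / 2 <= L (2 * INR n)).
  { replace (L (2 * INR n)) with (L (2 * INR n) / L (INR n) * L (INR n)) by (field; lra).
    assert (0 < (L (2 * INR n) / L (INR n) - 1 / 2) * L (INR n)) by (apply Rmult_lt_0_compat; lra).
    lra. }
  assert (0 < Rpower (INR n) (- (1 + alpha))) by (unfold Rpower; apply exp_pos).
  apply Rle_trans with (L (INR n) / 2 * (p * Rpower (INR n) (- (1 + alpha)))); [right; field|].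
  apply Rmult_le_compat_r; [nra | lra].
Qed.

Lemma INR_lt_pow2 : forall j, INR j < 2 ^ j.
Proof.
  induction j; [simpl; lra|]. rewrite S_INR; simpl.
  assert (1 <= 2 ^ j) by (apply pow_R1_Rle; lra). lra.
Qed.

Lemma doubling_sequence_unbounded : forall (a : nat -> R) n1 B, 0 < a n1 ->
  (forall n, (n1 <= n)%nat -> 2 * a n <= a (2 * n)%nat) ->
  ~ (forall n, (n1 <= n)%nat -> a n <= B).
Proof.
  intros a n1 B Hpos Hgrow HB.
  assert (Hiter : forall j n, (n1 <= n)%nat -> a n * 2 ^ j <= B).
  { induction j; intros n Hn; [simpl; rewrite Rmult_1_r; auto|].
    specialize (IHj (2 * n)%nat ltac:(lia)). specialize (Hgrow n Hn).
    assert (0 < 2 ^ j) by (apply pow_lt; lra). simpl. nra. }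
  destruct (INR_unbounded (B / a n1)) as [j Hj].
  specialize (Hiter j n1 (le_n _)). assert (Hp := INR_lt_pow2 j).
  assert (B / a n1 * a n1 = B) by (field; lra). nra.
Qed.

(* For [f < 0] the factor [e^(-f n)] eventually beats the loss [rho] in the
   doubling bound. *)
Lemma doubling_weighted : forall K rho M0 f, Kpos K -> 0 < rho -> f < 0 ->
  (forall n, (1 <= n)%nat -> M0 < INR n -> rho * K n <= K (2 * n)%nat) ->
  exists n1, (1 <= n1)%nat /\ forall n, (n1 <= n)%nat ->
    2 * (K n * exp (- f * INR n)) <= K (2 * n)%nat * exp (- f * INR (2 * n)).
Proof.
  intros K rho M0 f HK Hrho Hf Hdbl.
  set (r := ln (2 / rho) / (- f)).
  destruct (INR_unbounded (Rmax (Rmax M0 r) 0)) as [n1 Hn1].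
  assert (Hmax := Rmax_l (Rmax M0 r) 0). assert (Hmax0 := Rmax_r (Rmax M0 r) 0).
  assert (HM0 := Rmax_l M0 r). assert (Hr := Rmax_r M0 r).
  assert (Hn1pos : (1 <= n1)%nat) by (destruct n1; [simpl in Hn1; lra | lia]).
  exists n1. split; auto.
  intros n Hn. assert (INR n1 <= INR n) by (apply le_INR; auto).
  assert (Hn0 : (1 <= n)%nat) by lia.
  assert (Hexp : 2 <= rho * exp (- f * INR n)).
  { replace 2 with (rho * exp (ln (2 / rho))) by (rewrite exp_ln by (apply Rdiv_lt_0_compat; lra); field; lra).
    apply Rmult_le_compat_l; [lra|]. apply exp_le_compat.
    assert (r * (- f) = ln (2 / rho)) by (unfold r; field; lra). nra. }
  assert (Hk := Hdbl n Hn0 ltac:(lra)).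
  assert (0 < K n) by (apply HK; lia). assert (0 < exp (- f * INR n)) by apply exp_pos.
  rewrite mult_INR. replace (INR 2) with 2 by (simpl; lra).
  replace (exp (- f * (2 * INR n))) with (exp (- f * INR n) * exp (- f * INR n))
    by (rewrite <- exp_plus; f_equal; ring).
  apply Rle_trans with ((rho * exp (- f * INR n)) * (K n * exp (- f * INR n))).
  - apply Rmult_le_compat_r; [left; apply Rmult_lt_0_compat|]; lra.
  - apply Rle_trans with (rho * K n * (exp (- f * INR n) * exp (- f * INR n))); [right; ring|].
    apply Rmult_le_compat_r; [nra | exact Hk].
Qed.

Lemma rate_nonneg_of_doubling : forall K rho M0, Kpos K -> 0 < rho ->
  (forall n, (1 <= n)%nat -> M0 < INR n -> rho * K n <= K (2 * n)%nat) ->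
  forall f B, (forall n, (1 <= n)%nat -> K n * exp (- f * INR n) <= B) -> 0 <= f.
Proof.
  intros K rho M0 HK Hrho Hdbl f B HB.
  destruct (Rle_dec 0 f) as [|Hf]; [auto|]. exfalso. apply Rnot_le_lt in Hf.
  destruct (doubling_weighted K rho M0 f HK Hrho Hf Hdbl) as [n1 [Hn1 Hgrow]].
  apply (doubling_sequence_unbounded (fun n => K n * exp (- f * INR n)) n1 B).
  - apply Rmult_lt_0_compat; [apply HK; lia | apply exp_pos].
  - exact Hgrow.
  - intros n Hn. apply HB. lia.
Qed.

Lemma free_energy_nonneg : forall L alpha, slowly_varying L ->
  forall c Fc, Un_cv (fun N => ln (Zhom (Kfun L alpha) c N) / INR N) Fc -> 0 <= Fc.
Proof.
  intros L alpha HL c Fc Hcv. set (K := Kfun L alpha).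
  assert (HK : Kpos K) by (apply Kfun_pos; auto).
  destruct (Kfun_doubling L alpha HL) as [rho [M0 [Hrho Hdbl]]].
  apply (rate_nonneg_of_doubling K rho M0 HK Hrho Hdbl Fc (exp (- c))).
  intros n Hn. destruct n as [|n]; [lia|].
  assert (Hterm : K (S n) * exp (c - Fc * INR (S n)) <= 1).
  { eapply Rle_trans; [|apply (renewal_series_le_1 K HK c Fc Hcv (S n))].
    apply (sumn_term_le (S n) (fun k => K (S k) * exp (c - Fc * INR (S k))) n); [|lia].
    intros i Hi; apply Rmult_le_pos; [left; apply HK; lia | left; apply exp_pos]. }
  replace (exp (c - Fc * INR (S n))) with (exp c * exp (- Fc * INR (S n))) in Hterm
    by (rewrite <- exp_plus; f_equal; ring).
  assert (0 < exp c) by apply exp_pos.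
  apply (Rmult_le_reg_l (exp c)); auto. rewrite exp_Ropp, Rinv_r by lra. nra.
Qed.

(* [1 - Kcumul K l] is the probability that the first renewal comes after [l]. *)
Definition Kcumul (K : nat -> R) (l : nat) : R := sumn l (fun k => K (S k)).

Lemma Kcumul_sum_f_R0 : forall K n, sum_f_R0 (fun k => K (S k)) n = Kcumul K (S n).
Proof.
  intros K n; induction n; [unfold Kcumul; rewrite sumn_S, sumn_0; simpl; lra|].
  simpl. rewrite IHn. unfold Kcumul. rewrite (sumn_S (S n)). reflexivity.
Qed.

Section KernelMass.
Variable K : nat -> R.
Hypothesis HK : Kpos K.
Hypothesis Hmass : infinite_sum (fun n => K (S n)) 1.

Lemma Kcumul_le_compat : forall a b, (a <= b)%nat -> Kcumul K a <= Kcumul K b.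
Proof.
  intros a b H. unfold Kcumul. replace b with (a + (b - a))%nat by lia.
  rewrite sumn_add_range.
  assert (0 <= sumn (b - a) (fun k => K (S (a + k)))) by (apply sumn_nonneg; intros; left; apply HK; lia).
  lra.
Qed.

Lemma Kcumul_le_1 : forall l, Kcumul K l <= 1.
Proof.
  intros l. destruct (Rle_dec (Kcumul K l) 1) as [|H]; [auto|]. apply Rnot_le_lt in H.
  destruct (Hmass (Kcumul K l - 1) ltac:(lra)) as [N HN].
  specialize (HN (N + l)%nat ltac:(lia)). rewrite Kcumul_sum_f_R0 in HN.
  unfold Rdist in HN. apply Rabs_def2 in HN.
  assert (Kcumul K l <= Kcumul K (S (N + l))) by (apply Kcumul_le_compat; lia). lra.
Qed.

Lemma Kcumul_tail_small : forall eps, 0 < eps ->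
  exists l0, (1 <= l0)%nat /\ forall l, (l0 <= l)%nat -> 1 - Kcumul K l <= eps.
Proof.
  intros eps He. destruct (Hmass eps He) as [N HN]. exists (S N). split; [lia|].
  intros l Hl. destruct l as [|l]; [lia|]. specialize (HN l ltac:(lia)).
  rewrite Kcumul_sum_f_R0 in HN. unfold Rdist in HN. apply Rabs_def2 in HN. lra.
Qed.

End KernelMass.

Definition switches (q : nat -> nat) (N : nat) : R :=
  sumn N (fun k => if Nat.eqb (q (S k)) (q k) then 0 else 1).

(* The last [k < N] with [q (S k) <> q k], or [0] if there is none. *)
Fixpoint last_switch (q : nat -> nat) (N : nat) : nat :=
  match N with
  | O => O
  | S n => match n with
           | O => O
           | S _ => if Nat.eqb (q (S n)) (q n) then last_switch q n else n
           end
  end.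

Lemma switches_S : forall q n,
  switches q (S n) = switches q n + (if Nat.eqb (q (S n)) (q n) then 0 else 1).
Proof. intros; unfold switches; rewrite sumn_S; reflexivity. Qed.

Lemma switches_nonneg : forall q n, 0 <= switches q n.
Proof. intros; apply sumn_nonneg; intros; destruct Nat.eqb; lra. Qed.

Lemma last_switch_lt : forall q N, (1 <= N)%nat -> (last_switch q N < N)%nat.
Proof.
  intros q N; induction N; intros H; [lia|]. destruct N; simpl; [lia|].
  destruct (Nat.eqb (q (S (S N))) (q (S N))); [specialize (IHN ltac:(lia)); simpl in IHN|]; lia.
Qed.

Lemma last_switch_const : forall q N k, (last_switch q N < k <= N)%nat -> q k = q N.
Proof.
  intros q N; induction N; intros k Hk; [lia|]. destruct N.
  - simpl in Hk. replace k with 1%nat by lia. reflexivity.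
  - change (last_switch q (S (S N)))
      with (if Nat.eqb (q (S (S N))) (q (S N)) then last_switch q (S N) else S N) in Hk.
    destruct (Nat.eqb_spec (q (S (S N))) (q (S N))) as [Eq|Neq].
    + destruct (Nat.eq_dec k (S (S N))) as [->|]; [reflexivity|]. rewrite Eq. apply IHN. lia.
    + replace k with (S (S N)) by lia. reflexivity.
Qed.

Lemma switches_last_switch : forall q N, (1 <= last_switch q N)%nat ->
  switches q (last_switch q N) + 1 <= switches q N.
Proof.
  intros q N; induction N; intros H; [simpl in H; lia|]. destruct N; [simpl in H; lia|].
  change (last_switch q (S (S N)))
    with (if Nat.eqb (q (S (S N))) (q (S N)) then last_switch q (S N) else S N) in *.
  rewrite switches_S. destruct (Nat.eqb_spec (q (S (S N))) (q (S N))); [specialize (IHN H)|]; lra.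
Qed.

(** * Partition functions along a fixed index sequence *)

Lemma finite_uniform_bound : forall (P : nat -> R -> Prop) m,
  (forall i D D', D <= D' -> P i D -> P i D') ->
  (forall i, (i < m)%nat -> exists D, 0 <= D /\ P i D) ->
  exists D, 0 <= D /\ forall i, (i < m)%nat -> P i D.
Proof.
  intros P m Hmono; induction m; intros H; [exists 0; split; [lra | intros; lia]|].
  destruct IHm as [D1 [HD1 HP1]]; [intros; apply H; lia|].
  destruct (H m ltac:(lia)) as [D2 [HD2 HP2]].
  exists (Rmax D1 D2). split; [eapply Rle_trans; [exact HD1 | apply Rmax_l]|].
  intros i Hi. destruct (Nat.eq_dec i m) as [->|].
  - eapply Hmono; [apply Rmax_r | exact HP2].
  - eapply Hmono; [apply Rmax_l | apply HP1; lia].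
Qed.

Lemma finite_upper_bound : forall (g : nat -> R) m,
  exists B, 0 < B /\ forall i, (i < m)%nat -> g i <= B.
Proof.
  intros g m; induction m; [exists 1; split; [lra | intros; lia]|].
  destruct IHm as [B [HB H]]. exists (Rmax B (g m)).
  split; [eapply Rlt_le_trans; [exact HB | apply Rmax_l]|].
  intros i Hi. destruct (Nat.eq_dec i m) as [->|]; [apply Rmax_r|].
  eapply Rle_trans; [apply H; lia | apply Rmax_l].
Qed.

Section FixedPath.
Variable K : nat -> R.
Hypothesis HK : Kpos K.
Hypothesis Hmass : infinite_sum (fun n => K (S n)) 1.
Variable F : R -> R.
Variable c : nat -> R.
Variable m : nat.
Hypothesis HF0 : forall i, (i < m)%nat -> 0 <= F (c i).
Hypothesis HFcv : forall i, (i < m)%nat -> Un_cv (fun N => ln (Zhom K (c i) N) / INR N) (F (c i)).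

Definition Fsum (q : nat -> nat) (N : nat) : R := sumn N (fun k => F (c (q (S k)))).

Lemma Fsum_const_tail : forall q a N, (a <= N)%nat -> (forall k, (a < k <= N)%nat -> q k = q N) ->
  Fsum q N = Fsum q a + INR (N - a) * F (c (q N)).
Proof.
  intros q a N H Hc. unfold Fsum. replace N with (a + (N - a))%nat at 1 by lia.
  rewrite sumn_add_range, (sumn_ext (N - a) _ (fun _ => F (c (q N)))), sumn_const; [lra|].
  intros i Hi. rewrite Hc; auto; lia.
Qed.

Lemma Fsum_le_compat : forall q, (forall n, (q n < m)%nat) ->
  forall a N, (a <= N)%nat -> Fsum q a <= Fsum q N.
Proof.
  intros q Hq a N H. unfold Fsum. replace N with (a + (N - a))%nat by lia. rewrite sumn_add_range.
  assert (0 <= sumn (N - a) (fun k => F (c (q (S (a + k)))))) by (apply sumn_nonneg; intros; apply HF0, Hq).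
  lra.
Qed.

Lemma ln_Zpart_split_const : forall q a N, (a <= N)%nat ->
  (forall k, (a < k <= N)%nat -> q k = q N) ->
  ln (Zpart K (fun n => c (q n)) a) + ln (Zhom K (c (q N)) (N - a))
  <= ln (Zpart K (fun n => c (q n)) N).
Proof.
  intros q a N HaN Hc.
  assert (Hsup := Zpart_supermult K HK (fun n => c (q n)) a (N - a)).
  replace (a + (N - a))%nat with N in Hsup by lia.
  assert (Hext : Zpart K (fun n => c (q (a + n)%nat)) (N - a) = Zhom K (c (q N)) (N - a)).
  { apply (Zpart_ext K _ _ (N - a)); auto. intros k Hk. rewrite Hc; auto; lia. }
  rewrite Hext in Hsup.
  assert (0 < Zpart K (fun n => c (q n)) a) by apply (Zpart_pos K HK).
  assert (0 < Zhom K (c (q N)) (N - a)) by apply (Zpart_pos K HK).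
  rewrite <- ln_mult by auto. apply ln_le_compat; [apply Rmult_lt_0_compat|]; auto.
Qed.

(* Split at the last switch: the homogeneous lower bound on the final constant
   stretch, induction before it; each switch costs [D]. *)
Lemma ln_Zpart_lower : forall eps, 0 < eps -> exists D, 0 <= D /\
  forall q, (forall n, (q n < m)%nat) -> forall N, (1 <= N)%nat ->
  Fsum q N - eps * INR N - D * (1 + switches q N) <= ln (Zpart K (fun n => c (q n)) N).
Proof.
  intros eps He.
  destruct (finite_uniform_bound
              (fun i D => forall l, (1 <= l)%nat -> INR l * (F (c i) - eps) - D <= ln (Zhom K (c i) l)) m)
    as [D [HD HPD]].
  { intros i D D' HDD H l Hl. specialize (H l Hl). lra. }
  { intros i Hi. apply Zhom_ln_lower; auto. }
  exists D. split; auto. intros q Hq N.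
  induction N as [N IH] using lt_wf_ind. intros HN.
  set (a := last_switch q N). assert (Ha : (a < N)%nat) by (apply last_switch_lt; auto).
  assert (Hc : forall k, (a < k <= N)%nat -> q k = q N) by (intros; apply last_switch_const; auto).
  assert (Hln := ln_Zpart_split_const q a N ltac:(lia) Hc).
  assert (Hh := HPD (q N) (Hq N) (N - a)%nat ltac:(lia)).
  assert (HF := Fsum_const_tail q a N ltac:(lia) Hc).
  assert (Hsw0 := switches_nonneg q N).
  assert (HNa : INR (N - a) = INR N - INR a) by (apply minus_INR; lia).
  destruct (Nat.eq_dec a 0) as [Ha0|Ha0].
  - rewrite Ha0 in *. rewrite Zpart_0, ln_1 in Hln. unfold Fsum in HF; rewrite sumn_0 in HF.
    replace (N - 0)%nat with N in * by lia.
    assert (0 <= D * switches q N) by (apply Rmult_le_pos; auto). unfold Fsum. lra.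
  - specialize (IH a Ha ltac:(lia)).
    assert (Hsw := switches_last_switch q N ltac:(unfold a in Ha0; lia)). fold a in Hsw.
    assert (D * (switches q a + 1) <= D * switches q N) by (apply Rmult_le_compat_l; auto).
    rewrite HNa in Hh, HF. lra.
Qed.

Variable E : R.
Hypothesis HE0 : 0 < E.
Hypothesis HE : forall i, (i < m)%nat -> exp (c i) <= E.

Lemma renewal_sum_before_switch : forall q, (forall n, (q n < m)%nat) -> forall a N, (a <= N)%nat ->
  sumn a (fun j => exp (Fsum q j) * K (N - j)%nat) * exp (c (q N))
  <= exp (Fsum q N) * (E * (1 - Kcumul K (N - a))).
Proof.
  intros q Hq a N HaN. set (l := (N - a)%nat).
  assert (Hsplit : Kcumul K N = sumn a (fun j => K (N - j)%nat) + Kcumul K l).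
  { unfold Kcumul. rewrite <- (sumn_rev N K). replace N with (a + l)%nat at 1 by (unfold l; lia).
    rewrite sumn_add_range. f_equal. rewrite <- (sumn_rev l K).
    apply sumn_ext. intros; f_equal; unfold l; lia. }
  assert (HN1 := Kcumul_le_1 K HK Hmass N).
  assert (HcE : exp (c (q N)) <= E) by apply HE, Hq.
  assert (Hterms : sumn a (fun j => exp (Fsum q j) * K (N - j)%nat) * exp (c (q N))
                   <= exp (Fsum q N) * E * sumn a (fun j => K (N - j)%nat)).
  { rewrite (Rmult_comm _ (exp (c (q N)))), <- !sumn_scal. apply sumn_le_compat. intros j Hj.
    assert (0 < K (N - j)%nat) by (apply HK; lia).
    assert (exp (Fsum q j) <= exp (Fsum q N)) by (apply exp_le_compat, Fsum_le_compat; auto; lia).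
    assert (0 < exp (Fsum q j)) by apply exp_pos. assert (0 < exp (c (q N))) by apply exp_pos.
    apply Rle_trans with ((exp (Fsum q j) * exp (c (q N))) * K (N - j)%nat); [right; ring|].
    apply Rmult_le_compat_r; [lra|]. apply Rmult_le_compat; lra. }
  assert (0 < exp (Fsum q N)) by apply exp_pos.
  assert (0 < exp (Fsum q N) * E) by (apply Rmult_lt_0_compat; auto).
  nra.
Qed.

Lemma renewal_sum_since_switch : forall q a N, (a <= N)%nat -> (q N < m)%nat ->
  (forall k, (a < k <= N)%nat -> q k = q N) ->
  sumn (N - a) (fun k => exp (Fsum q (a + k)) * K (N - (a + k))%nat) * exp (c (q N))
  <= exp (Fsum q N).
Proof.
  intros q a N HaN HqN Hc. set (l := (N - a)%nat). set (cc := c (q N)). set (f := F cc).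
  assert (Heq : sumn l (fun k => exp (Fsum q (a + k)) * K (N - (a + k))%nat) * exp cc =
                exp (Fsum q N) * sumn l (fun k => K (l - k)%nat * exp (cc - f * INR (l - k)%nat))).
  { rewrite (Rmult_comm _ (exp cc)), <- !sumn_scal. apply sumn_ext. intros k Hk.
    assert (HF := Fsum_const_tail q (a + k) N ltac:(unfold l in Hk; lia)
                    ltac:(intros; apply Hc; lia)).
    replace (N - (a + k))%nat with (l - k)%nat in * by (unfold l; lia). fold cc f in HF.
    rewrite HF, exp_plus, (Rmult_comm (INR (l - k)) f).
    replace (exp (cc - f * INR (l - k))) with (exp cc * / exp (f * INR (l - k)))
      by (rewrite <- exp_Ropp, <- exp_plus; f_equal; ring).
    assert (0 < exp (f * INR (l - k))) by apply exp_pos. field. lra. }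
  rewrite Heq, (sumn_rev l (fun j => K j * exp (cc - f * INR j))).
  assert (Hser := renewal_series_le_1 K HK cc f (HFcv (q N) HqN) l).
  assert (0 < exp (Fsum q N)) by apply exp_pos.
  unfold renewal_series in Hser. nra.
Qed.

(* One step of the renewal recursion: the part after the last switch is
   controlled by the homogeneous free energy, the part before it by the tail
   [1 - Kcumul K (N - last_switch q N)]. *)
Lemma renewal_sum_le : forall q, (forall n, (q n < m)%nat) -> forall N, (1 <= N)%nat ->
  sumn N (fun j => exp (Fsum q j) * K (N - j)%nat) * exp (c (q N))
  <= exp (Fsum q N) * (1 + E * (1 - Kcumul K (N - last_switch q N))).
Proof.
  intros q Hq N HN. set (a := last_switch q N).
  assert (Ha : (a < N)%nat) by (apply last_switch_lt; auto).
  replace N with (a + (N - a))%nat at 1 by lia. rewrite sumn_add_range, Rmult_plus_distr_r.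
  assert (H1 := renewal_sum_before_switch q Hq a N ltac:(lia)).
  assert (H2 := renewal_sum_since_switch q a N ltac:(lia) (Hq N)
                  ltac:(intros; apply last_switch_const; auto)).
  lra.
Qed.

Variable eps : R.
Hypothesis Heps : 0 < eps.
Variable l0 : nat.
Hypothesis Hl0 : (1 <= l0)%nat.
Hypothesis Hl0tail : forall l, (l0 <= l)%nat -> E * (1 - Kcumul K l) <= eps.

(* Each step of the upper-bound induction costs [E (1 - Kcumul K l)], [l] the
   time since the last switch: at most [eps] once [l >= l0], and at most [E]
   during the first [l0] steps after each switch. *)
Definition upper_potential (q : nat -> nat) (N : nat) : R :=
  eps * INR N + E * (INR l0 * switches q N + Rmin (INR (N - last_switch q N)) (INR l0)).

Lemma Kcumul_tail_bounds : forall l, 0 <= 1 - Kcumul K l <= 1.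
Proof.
  intros l. assert (H := Kcumul_le_1 K HK Hmass l).
  assert (0 <= Kcumul K l) by (apply sumn_nonneg; intros; left; apply HK; lia). lra.
Qed.

Lemma upper_potential_step : forall q n,
  upper_potential q n + E * (1 - Kcumul K (S n - last_switch q (S n))) <= upper_potential q (S n).
Proof.
  intros q n. assert (HR0 : 1 <= INR l0) by (apply (le_INR 1); auto).
  unfold upper_potential. rewrite S_INR.
  destruct n.
  - simpl last_switch. simpl (INR (1 - 0)). simpl (INR (0 - 0)).
    replace (switches q 0) with 0 by reflexivity.
    rewrite (Rmin_left 1), (Rmin_left 0) by lra.
    assert (Ht := Kcumul_tail_bounds (1 - 0)). assert (Hs := switches_nonneg q 1). simpl INR.
    assert (0 <= E * INR l0 * switches q 1) by (apply Rmult_le_pos; [nra | auto]). nra.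
  - change (last_switch q (S (S n)))
      with (if Nat.eqb (q (S (S n))) (q (S n)) then last_switch q (S n) else S n).
    rewrite (switches_S q (S n)). assert (Hrs := last_switch_lt q (S n) ltac:(lia)).
    destruct (Nat.eqb_spec (q (S (S n))) (q (S n))) as [Eq|Neq]; cbv iota.
    + set (r := INR (S n - last_switch q (S n))).
      assert (Hr : INR (S (S n) - last_switch q (S n)) = r + 1)
        by (unfold r; rewrite <- S_INR; f_equal; lia).
      rewrite Hr. assert (Ht := Kcumul_tail_bounds (S (S n) - last_switch q (S n))).
      destruct (Rle_dec (r + 1) (INR l0)) as [Hle|Hlt].
      * rewrite (Rmin_left (r + 1)), (Rmin_left r) by lra. nra.
      * apply Rnot_le_lt in Hlt. rewrite (Rmin_right (r + 1)) by lra.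
        assert (Hl : (l0 <= S (S n) - last_switch q (S n))%nat) by (apply INR_le; rewrite Hr; lra).
        assert (H1 := Hl0tail _ Hl). assert (Rmin r (INR l0) <= INR l0) by apply Rmin_r. nra.
    + replace (S (S n) - S n)%nat with 1%nat by lia. simpl (INR 1).
      rewrite (Rmin_left 1) by lra. assert (Ht := Kcumul_tail_bounds 1).
      assert (Rmin (INR (S n - last_switch q (S n))) (INR l0) <= INR l0) by apply Rmin_r. nra.
Qed.

Lemma upper_potential_le_compat : forall q a N, (a <= N)%nat ->
  upper_potential q a <= upper_potential q N.
Proof.
  intros q a N H; induction H as [|N H IH]; [lra|].
  assert (Hs := upper_potential_step q N).
  assert (Ht := Kcumul_tail_bounds (S N - last_switch q (S N))). nra.
Qed.

Lemma Zpart_upper : forall q, (forall n, (q n < m)%nat) -> forall N,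
  Zpart K (fun n => c (q n)) N <= exp (Fsum q N + upper_potential q N).
Proof.
  intros q Hq N. induction N as [N IH] using lt_wf_ind. destruct N as [|n].
  - rewrite Zpart_0. unfold Fsum, upper_potential. rewrite sumn_0. simpl.
    replace (switches q 0) with 0 by reflexivity.
    rewrite Rmin_left by (assert (H := pos_INR l0); lra).
    replace (0 + (eps * 0 + E * (INR l0 * 0 + 0))) with 0 by ring. rewrite exp_0. lra.
  - rewrite Zpart_S.
    assert (H1 : sumn (S n) (fun j => Zpart K (fun n0 => c (q n0)) j * K (S n - j)%nat) * exp (c (q (S n)))
             <= exp (upper_potential q n)
                * (sumn (S n) (fun j => exp (Fsum q j) * K (S n - j)%nat) * exp (c (q (S n))))).
    { rewrite <- Rmult_assoc. apply Rmult_le_compat_r; [left; apply exp_pos|].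
      rewrite <- sumn_scal. apply sumn_le_compat. intros j Hj.
      assert (0 < K (S n - j)%nat) by (apply HK; lia).
      rewrite <- Rmult_assoc. apply Rmult_le_compat_r; [lra|].
      rewrite <- exp_plus. eapply Rle_trans; [apply IH; lia|]. apply exp_le_compat.
      assert (upper_potential q j <= upper_potential q n) by (apply upper_potential_le_compat; lia). lra. }
    assert (H2 := renewal_sum_le q Hq (S n) ltac:(lia)).
    assert (H3 := upper_potential_step q n).
    set (T := E * (1 - Kcumul K (S n - last_switch q (S n)))) in *.
    assert (H4 := exp_ineq1_le T).
    eapply Rle_trans; [exact H1|].
    apply Rle_trans with (exp (upper_potential q n) * (exp (Fsum q (S n)) * exp T)).
    + apply Rmult_le_compat_l; [left; apply exp_pos|]. eapply Rle_trans; [exact H2|].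
      apply Rmult_le_compat_l; [left; apply exp_pos | lra].
    + rewrite <- !exp_plus. apply exp_le_compat. lra.
Qed.

End FixedPath.

Lemma ln_Zpart_pathwise : forall K, Kpos K -> infinite_sum (fun n => K (S n)) 1 ->
  forall (F : R -> R) (c : nat -> R) m,
  (forall i, (i < m)%nat -> 0 <= F (c i)) ->
  (forall i, (i < m)%nat -> Un_cv (fun N => ln (Zhom K (c i) N) / INR N) (F (c i))) ->
  forall eps, 0 < eps -> exists D, 0 <= D /\
  forall q, (forall n, (q n < m)%nat) -> forall N, (1 <= N)%nat ->
  Rabs (ln (Zpart K (fun n => c (q n)) N) - Fsum F c q N) <= eps * INR N + D * (1 + switches q N).
Proof.
  intros K HK Hmass F c m HF0 HFcv eps He.
  destruct (ln_Zpart_lower K HK F c m HFcv eps He) as [D1 [HD1 Hlow]].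
  destruct (finite_upper_bound (fun i => exp (c i)) m) as [E [HE0 HE]].
  destruct (Kcumul_tail_small K Hmass (eps / E)) as [l0 [Hl0 Hl0tail]];
    [apply Rdiv_lt_0_compat; lra|].
  assert (HEtail : forall l, (l0 <= l)%nat -> E * (1 - Kcumul K l) <= eps).
  { intros l Hl. specialize (Hl0tail l Hl). apply (Rmult_le_compat_l E) in Hl0tail; [|lra].
    replace (E * (eps / E)) with eps in Hl0tail by (field; lra). exact Hl0tail. }
  exists (Rmax D1 (E * INR l0)). split; [eapply Rle_trans; [exact HD1 | apply Rmax_l]|].
  intros q Hq N HN.
  assert (Hup := Zpart_upper K HK Hmass F c m HF0 HFcv E HE0 HE eps He l0 Hl0 HEtail q Hq N).
  assert (Hpos : 0 < Zpart K (fun n => c (q n)) N) by apply (Zpart_pos K HK).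
  apply ln_le_compat in Hup; auto. rewrite ln_exp in Hup.
  assert (Hl := Hlow q Hq N HN).
  assert (Hsw := switches_nonneg q N).
  assert (Hpot : upper_potential E eps l0 q N <= eps * INR N + E * INR l0 * (1 + switches q N)).
  { unfold upper_potential.
    assert (Rmin (INR (N - last_switch q N)) (INR l0) <= INR l0) by apply Rmin_r. nra. }
  assert (D1 * (1 + switches q N) <= Rmax D1 (E * INR l0) * (1 + switches q N))
    by (apply Rmult_le_compat_r; [lra | apply Rmax_l]).
  assert (E * INR l0 * (1 + switches q N) <= Rmax D1 (E * INR l0) * (1 + switches q N))
    by (apply Rmult_le_compat_r; [lra | apply Rmax_r]).
  apply Rabs_le. split; lra.
Qed.

(** * Expectations over paths of a Markov chain *)

Definition lsum {A : Type} (l : list A) (g : A -> R) : R := fold_right Rplus 0 (map g l).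

Lemma lsum_app : forall A (l1 l2 : list A) g, lsum (l1 ++ l2) g = lsum l1 g + lsum l2 g.
Proof. intros; apply fold_right_Rplus_app. Qed.

Lemma lsum_ext_in : forall A (l : list A) g g', (forall a, In a l -> g a = g' a) -> lsum l g = lsum l g'.
Proof.
  intros A l g g' H; induction l; [reflexivity|]. unfold lsum in *; simpl.
  rewrite H by (left; auto). rewrite IHl; auto. intros; apply H; right; auto.
Qed.

Lemma lsum_le_in : forall A (l : list A) g g', (forall a, In a l -> g a <= g' a) -> lsum l g <= lsum l g'.
Proof.
  intros A l g g' H; induction l; unfold lsum in *; simpl; [lra|].
  assert (g a <= g' a) by (apply H; left; auto).
  assert (fold_right Rplus 0 (map g l) <= fold_right Rplus 0 (map g' l))
    by (apply IHl; intros; apply H; right; auto).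
  lra.
Qed.

Lemma lsum_add : forall A (l : list A) g g', lsum l (fun a => g a + g' a) = lsum l g + lsum l g'.
Proof. intros A l g g'; induction l; unfold lsum in *; simpl; [lra | rewrite IHl; lra]. Qed.

Lemma lsum_scal : forall A (l : list A) c g, lsum l (fun a => c * g a) = c * lsum l g.
Proof. intros A l c g; induction l; unfold lsum in *; simpl; [lra | rewrite IHl; lra]. Qed.

Lemma lsum_paths_S : forall m k g,
  lsum (paths m (S k)) g = lsum (paths m k) (fun p => sumn m (fun i => g (p ++ [i]))).
Proof.
  intros m k g. simpl. induction (paths m k) as [|p ps IH]; [reflexivity|].
  simpl. rewrite lsum_app, IH. unfold lsum at 1 3. simpl. f_equal.
  unfold lsum, sumn. rewrite map_map. reflexivity.
Qed.

Lemma in_paths : forall m k p, In p (paths m k) ->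
  length p = k /\ (forall i, In i p -> (i < m)%nat).
Proof.
  intros m k; induction k; intros p H.
  - destruct H as [<-|[]]. split; [reflexivity | intros i []].
  - simpl in H. apply in_flat_map in H. destruct H as [p0 [Hp0 Hi]].
    apply in_map_iff in Hi. destruct Hi as [i [<- Hi]]. apply in_seq in Hi.
    destruct (IHk p0 Hp0) as [Hl Hm]. split; [rewrite length_app; simpl; lia|].
    intros j Hj. apply in_app_or in Hj. destruct Hj as [Hj|[<-|[]]]; auto; lia.
Qed.

Lemma nth_in_range : forall m (p : list nat) n, (0 < m)%nat ->
  (forall i, In i p -> (i < m)%nat) -> (nth n p 0%nat < m)%nat.
Proof.
  intros m p n Hm H. destruct (lt_dec n (length p)); [apply H, nth_In; auto|].
  rewrite nth_overflow by lia. auto.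
Qed.

Lemma path_weight_from_app : forall P q prev i,
  path_weight_from P prev (q ++ [i]) = path_weight_from P prev q * P (last (prev :: q) 0%nat) i.
Proof.
  intros P q; induction q as [|a q IH]; intros prev i; [simpl; ring|].
  change (P prev a * path_weight_from P a (q ++ [i])
          = P prev a * path_weight_from P a q * P (last (prev :: a :: q) 0%nat) i).
  rewrite IH. replace (last (prev :: a :: q) 0%nat) with (last (a :: q) 0%nat) by (destruct q; reflexivity).
  ring.
Qed.

Lemma path_weight_app : forall mu P p i, p <> [] ->
  path_weight mu P (p ++ [i]) = path_weight mu P p * P (last p 0%nat) i.
Proof.
  intros mu P p i Hp. destruct p as [|a q]; [congruence|].
  change (mu a * path_weight_from P a (q ++ [i]) = mu a * path_weight_from P a q * P (last (a :: q) 0%nat) i).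
  rewrite path_weight_from_app. ring.
Qed.

Lemma stationary_one_step : forall m mu (P : nat -> nat -> R),
  (forall j, (j < m)%nat -> sumn m (fun i => mu i * P i j) = mu j) ->
  forall phi, sumn m (fun j => mu j * sumn m (fun i => P j i * phi i)) = sumn m (fun i => mu i * phi i).
Proof.
  intros m mu P Hinv phi.
  rewrite (sumn_ext m _ (fun j => sumn m (fun i => mu j * P j i * phi i))).
  2:{ intros; rewrite <- sumn_scal; apply sumn_ext; intros; ring. }
  rewrite sumn_swap. apply sumn_ext. intros i Hi.
  rewrite (sumn_ext m _ (fun j => phi i * (mu j * P j i))) by (intros; ring).
  rewrite sumn_scal, Hinv by auto. ring.
Qed.

Section Markov.
Variable m : nat.
Variable mu : nat -> R.
Variable P : nat -> nat -> R.
Hypothesis HP : stochastic m P.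
Hypothesis Hmu : invariant_distribution m P mu.

(* [markov_expect m x mu P N G] unfolds to
   [path_expect (S N) (fun p => G (fun n => x (nth n p 0)))]. *)
Definition path_expect (k : nat) (G : list nat -> R) : R :=
  lsum (paths m k) (fun p => path_weight mu P p * G p).

Lemma path_weight_nonneg : forall p, (forall i, In i p -> (i < m)%nat) -> 0 <= path_weight mu P p.
Proof.
  destruct HP as [HP0 _]. destruct Hmu as [Hmu0 _].
  assert (Hfrom : forall q prev, (prev < m)%nat -> (forall i, In i q -> (i < m)%nat) ->
                  0 <= path_weight_from P prev q).
  { intros q; induction q; intros prev Hprev Hq; simpl; [lra|].
    apply Rmult_le_pos; [apply HP0; auto; apply Hq; left; auto|].
    apply IHq; [apply Hq; left; auto | intros; apply Hq; right; auto]. }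
  intros p H. destruct p; simpl; [lra|].
  apply Rmult_le_pos; [apply Hmu0, H; left; auto|].
  apply Hfrom; [apply H; left; auto | intros; apply H; right; auto].
Qed.

Lemma path_expect_ext : forall k G G', (forall p, In p (paths m k) -> G p = G' p) ->
  path_expect k G = path_expect k G'.
Proof. intros k G G' H. apply lsum_ext_in. intros p Hp. rewrite H; auto. Qed.

Lemma path_expect_le : forall k G G', (forall p, In p (paths m k) -> G p <= G' p) ->
  path_expect k G <= path_expect k G'.
Proof.
  intros k G G' H. apply lsum_le_in. intros p Hp. apply Rmult_le_compat_l; auto.
  apply path_weight_nonneg, (in_paths m k p Hp).
Qed.

Lemma path_expect_add : forall k G G',
  path_expect k (fun p => G p + G' p) = path_expect k G + path_expect k G'.
Proof. intros. unfold path_expect. rewrite <- lsum_add. apply lsum_ext_in; intros; ring. Qed.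

Lemma path_expect_scal : forall k c G, path_expect k (fun p => c * G p) = c * path_expect k G.
Proof. intros. unfold path_expect. rewrite <- lsum_scal. apply lsum_ext_in; intros; ring. Qed.

Lemma path_expect_sumn : forall k n (g : nat -> list nat -> R),
  path_expect k (fun p => sumn n (fun t => g t p)) = sumn n (fun t => path_expect k (g t)).
Proof.
  intros k n g; induction n.
  - rewrite sumn_0, (path_expect_ext k _ (fun _ => 0 * 0)) by (intros; rewrite sumn_0; ring).
    rewrite path_expect_scal. ring.
  - rewrite sumn_S, <- IHn, <- path_expect_add. apply path_expect_ext. intros; rewrite sumn_S; reflexivity.
Qed.

Lemma path_expect_S : forall k G, (1 <= k)%nat ->
  path_expect (S k) G = path_expect k (fun p => sumn m (fun i => P (last p 0%nat) i * G (p ++ [i]))).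
Proof.
  intros k G Hk. unfold path_expect. rewrite lsum_paths_S. apply lsum_ext_in. intros p Hp.
  destruct (in_paths m k p Hp) as [Hl _].
  assert (p <> []) by (intros ->; simpl in Hl; lia).
  rewrite <- sumn_scal. apply sumn_ext. intros i _. rewrite path_weight_app; auto. ring.
Qed.

Lemma path_expect_last : forall k phi, (1 <= k)%nat ->
  path_expect k (fun p => phi (last p 0%nat)) = sumn m (fun j => mu j * phi j).
Proof.
  destruct Hmu as [_ [_ Hinv]].
  intros k; induction k; intros phi Hk; [lia|]. destruct k.
  - unfold path_expect. rewrite lsum_paths_S. unfold lsum. simpl. rewrite Rplus_0_r.
    apply sumn_ext. intros; ring.
  - rewrite path_expect_S by lia.
    rewrite (path_expect_ext _ _ (fun p => (fun j => sumn m (fun i => P j i * phi i)) (last p 0%nat))).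
    2:{ intros p _. apply sumn_ext. intros; rewrite last_last; reflexivity. }
    rewrite (IHk (fun j => sumn m (fun i => P j i * phi i))) by lia.
    apply stationary_one_step; auto.
Qed.

Lemma path_expect_const : forall k c, (1 <= k)%nat -> path_expect k (fun _ => c) = c.
Proof.
  intros k c Hk. destruct Hmu as [_ [Hmu1 _]].
  rewrite (path_expect_last k (fun _ => c) Hk).
  rewrite (sumn_ext _ _ (fun j => c * mu j)), sumn_scal, Hmu1 by (intros; ring). ring.
Qed.

Lemma path_expect_extend : forall n G,
  (forall p i, (S n <= length p)%nat -> G (p ++ [i]) = G p) ->
  forall k, (S n <= k)%nat -> path_expect k G = path_expect (S n) G.
Proof.
  destruct HP as [_ HP1].
  intros n G HG k Hk. induction Hk as [|k Hk IH]; [reflexivity|]. rewrite <- IH.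
  rewrite path_expect_S by lia. apply path_expect_ext. intros p Hp.
  destruct (in_paths m k p Hp) as [Hl Hin]. assert (p <> []) by (intros ->; simpl in Hl; lia).
  rewrite (sumn_ext _ _ (fun i => G p * P (last p 0%nat) i)) by (intros; rewrite HG by lia; ring).
  rewrite sumn_scal, HP1; [ring|]. apply Hin.
  destruct (exists_last H) as [p' [a ->]]. rewrite last_last. apply in_or_app; right; left; auto.
Qed.

Lemma path_expect_pair : forall N n (psi : nat -> nat -> R), (n < N)%nat ->
  path_expect (S N) (fun p => psi (nth n p 0%nat) (nth (S n) p 0%nat))
  = sumn m (fun j => mu j * sumn m (fun i => P j i * psi j i)).
Proof.
  intros N n psi Hn.
  rewrite (path_expect_extend (S n)); [|intros p i Hl; cbv beta; rewrite !app_nth1 by lia; reflexivity | lia].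
  rewrite path_expect_S by lia.
  rewrite (path_expect_ext _ _ (fun p => (fun j => sumn m (fun i => P j i * psi j i)) (last p 0%nat))).
  - apply (path_expect_last (S n) (fun j => sumn m (fun i => P j i * psi j i))); lia.
  - intros p Hp. destruct (in_paths m (S n) p Hp) as [Hl _].
    assert (p <> []) by (intros ->; simpl in Hl; lia).
    destruct (exists_last H) as [p' [a ->]]. rewrite length_app in Hl. simpl in Hl.
    apply sumn_ext. intros i _. rewrite last_last.
    rewrite <- app_assoc. simpl. replace n with (length p') by lia.
    rewrite nth_middle, app_nth2, Nat.sub_succ_l, Nat.sub_diag by lia. reflexivity.
Qed.

Lemma path_expect_additive : forall N (phi : nat -> R),
  path_expect (S N) (fun p => sumn N (fun k => phi (nth (S k) p 0%nat)))
  = INR N * sumn m (fun i => mu i * phi i).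
Proof.
  destruct Hmu as [_ [_ Hinv]].
  intros N phi. rewrite path_expect_sumn, <- sumn_const. apply sumn_ext. intros k Hk.
  rewrite (path_expect_pair N k (fun _ i => phi i)) by lia.
  apply stationary_one_step; auto.
Qed.

Lemma path_expect_switches : forall N t,
  (forall j, (j < m)%nat -> sumn m (fun i => P j i * (if Nat.eqb i j then 0 else 1)) <= t) ->
  path_expect (S N) (fun p => switches (fun n => nth n p 0%nat) N) <= INR N * t.
Proof.
  destruct Hmu as [Hmu0 [Hmu1 _]].
  intros N t Hsw. unfold switches. rewrite path_expect_sumn, <- sumn_const.
  apply sumn_le_compat. intros k Hk.
  rewrite (path_expect_pair N k (fun j i => if Nat.eqb i j then 0 else 1)) by lia.
  apply Rle_trans with (sumn m (fun j => mu j * t)).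
  - apply sumn_le_compat. intros j Hj. apply Rmult_le_compat_l; auto.
  - rewrite (sumn_ext m _ (fun j => t * mu j)), sumn_scal, Hmu1 by (intros; ring). lra.
Qed.

Lemma path_expect_approx : forall k G A B e b, (1 <= k)%nat -> 0 <= b ->
  (forall p, In p (paths m k) -> Rabs (G p - A p) <= e + b * B p) ->
  Rabs (path_expect k G - path_expect k A) <= e + b * path_expect k B.
Proof.
  intros k G A B e b Hk Hb H. apply Rabs_le.
  assert (Hpt : forall p, In p (paths m k) -> - (e + b * B p) <= G p - A p <= e + b * B p).
  { intros p Hp. specialize (H p Hp). pose proof (Rle_abs (G p - A p)).
    pose proof (Rle_abs (- (G p - A p))). rewrite Rabs_Ropp in *. lra. }
  assert (Hup : path_expect k G <= path_expect k (fun p => A p + (e + b * B p))).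
  { apply path_expect_le. intros p Hp. specialize (Hpt p Hp). lra. }
  assert (Hlo : path_expect k (fun p => A p + (- e + - b * B p)) <= path_expect k G).
  { apply path_expect_le. intros p Hp. specialize (Hpt p Hp). lra. }
  rewrite !path_expect_add, !path_expect_const, !path_expect_scal in Hup, Hlo by auto.
  lra.
Qed.

End Markov.

(** * The chain [Q^(N)] *)

Lemma Rpower_neg_bounds : forall gamma N, 0 < gamma -> (1 <= N)%nat ->
  0 < Rpower (INR N) (- gamma) <= 1.
Proof.
  intros gamma N Hg HN. unfold Rpower. split; [apply exp_pos|].
  rewrite <- exp_0. apply exp_le_compat.
  assert (0 <= ln (INR N)) by (rewrite <- ln_1; apply ln_le_compat; [lra | apply (le_INR 1); auto]).
  nra.
Qed.

Lemma Rpower_neg_eventually_le : forall gamma A, 0 < gamma -> 0 < A ->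
  exists N0, forall N, (N0 <= N)%nat -> Rpower (INR N) (- gamma) <= A.
Proof.
  intros gamma A Hg HA. set (r := - ln A / gamma).
  destruct (INR_unbounded (exp r)) as [N0 HN0]. exists N0. intros N HN.
  assert (HN0pos : 0 < INR N0) by (pose proof (exp_pos r); lra).
  assert (INR N0 <= INR N) by (apply le_INR; auto).
  unfold Rpower. rewrite <- (exp_ln A) by auto. apply exp_le_compat.
  assert (r < ln (INR N)).
  { rewrite <- (ln_exp r). apply Rlt_le_trans with (ln (INR N0)).
    - apply ln_increasing; auto. apply exp_pos.
    - apply ln_le_compat; auto. }
  assert (r * gamma = - ln A) by (unfold r; field; lra). nra.
Qed.

Section LazyChain.
Variable m : nat.
Variable Q : nat -> nat -> R.
Hypothesis HQ : stochastic m Q.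
Variables (gamma : R) (N : nat).
Hypothesis Hgamma : 0 < gamma.
Hypothesis HN : (1 <= N)%nat.

Let t := Rpower (INR N) (- gamma).

Lemma QN_stochastic : stochastic m (QN Q gamma N).
Proof.
  destruct HQ as [HQ0 HQ1]. assert (Ht := Rpower_neg_bounds gamma N Hgamma HN). split.
  - intros i j Hi Hj. specialize (HQ0 i j Hi Hj). unfold QN.
    destruct (Nat.eqb i j); nra.
  - intros i Hi. unfold QN.
    rewrite sumn_add, sumn_scal, (sumn_ext m (fun j => Q i j - _)
      (fun j => Q i j + (-1) * (if Nat.eqb i j then 1 else 0))) by (intros; ring).
    rewrite sumn_add, sumn_scal, sumn_delta, HQ1 by auto. ring.
Qed.

Lemma QN_switch_le : forall j, (j < m)%nat ->
  sumn m (fun i => QN Q gamma N j i * (if Nat.eqb i j then 0 else 1)) <= t.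
Proof.
  intros j Hj. destruct HQ as [HQ0 _]. assert (Ht := Rpower_neg_bounds gamma N Hgamma HN).
  destruct QN_stochastic as [_ HQN1].
  rewrite (sumn_ext m _ (fun i => QN Q gamma N j i + (-1) * (QN Q gamma N j i * (if Nat.eqb i j then 1 else 0))))
    by (intros; destruct (Nat.eqb i j); ring).
  rewrite sumn_add, sumn_scal, sumn_indicator, HQN1 by auto.
  unfold QN. rewrite Nat.eqb_refl. assert (0 <= Q j j) by (apply HQ0; auto). unfold t. nra.
Qed.

End LazyChain.

Lemma QN_invariant : forall m Q mu gamma N,
  invariant_distribution m Q mu -> invariant_distribution m (QN Q gamma N) mu.
Proof.
  intros m Q mu gamma N [Hmu0 [Hmu1 Hinv]]. split; [auto | split; [auto|]].
  intros j Hj. unfold QN. set (t := Rpower (INR N) (- gamma)).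
  rewrite (sumn_ext m _ (fun i => mu i * (if Nat.eqb i j then 1 else 0)
             + t * (mu i * Q i j + (-1) * (mu i * (if Nat.eqb i j then 1 else 0))))) by (intros; ring).
  rewrite sumn_add, sumn_scal, sumn_add, sumn_scal, sumn_indicator, Hinv by auto. ring.
Qed.

(** * The quenched free energy under [P^(N)] *)

Lemma path_expect_average_close : forall m mu P, (0 < m)%nat ->
  stochastic m P -> invariant_distribution m P mu ->
  forall (f : nat -> R) (Y : (nat -> nat) -> R) N t eps D, (1 <= N)%nat -> 0 <= D ->
  (forall j, (j < m)%nat -> sumn m (fun i => P j i * (if Nat.eqb i j then 0 else 1)) <= t) ->
  (forall q, (forall n, (q n < m)%nat) ->
     Rabs (Y q - sumn N (fun k => f (q (S k)))) <= eps * INR N + D * (1 + switches q N)) ->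
  Rabs (path_expect m mu P (S N) (fun p => Y (fun n => nth n p 0%nat) / INR N)
        - sumn m (fun i => mu i * f i)) <= eps + D / INR N + D * t.
Proof.
  intros m mu P Hm HP Hmu f Y N t eps D HN HD Hsw HY.
  assert (HNpos : 0 < INR N) by (apply lt_0_INR; lia).
  assert (HDN : 0 <= D / INR N) by (unfold Rdiv; apply Rmult_le_pos; [lra | left; apply Rinv_0_lt_compat; lra]).
  set (A := fun p : list nat => / INR N * sumn N (fun k => f (nth (S k) p 0%nat))).
  assert (HA : path_expect m mu P (S N) A = sumn m (fun i => mu i * f i)).
  { unfold A. rewrite path_expect_scal, path_expect_additive by auto. field. lra. }
  assert (HB := path_expect_switches m mu P HP Hmu N t Hsw).
  rewrite <- HA.
  eapply Rle_trans.
  - apply (path_expect_approx m mu P HP Hmu (S N) _ A (fun p => switches (fun n => nth n p 0%nat) N)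
             (eps + D / INR N) (D / INR N)); [lia | auto|].
    intros p Hp. destruct (in_paths m (S N) p Hp) as [_ Hin].
    specialize (HY (fun n => nth n p 0%nat) (fun n => nth_in_range m p n Hm Hin)).
    unfold A. replace (Y (fun n => nth n p 0%nat) / INR N - / INR N * sumn N (fun k => f (nth (S k) p 0%nat)))
      with ((Y (fun n => nth n p 0%nat) - sumn N (fun k => f (nth (S k) p 0%nat))) / INR N) by (field; lra).
    unfold Rdiv. rewrite Rabs_mult, (Rabs_right (/ INR N)) by (left; apply Rinv_0_lt_compat; lra).
    apply Rle_trans with ((eps * INR N + D * (1 + switches (fun n => nth n p 0%nat) N)) * / INR N).
    + apply Rmult_le_compat_r; [left; apply Rinv_0_lt_compat|]; lra.
    + right. field. lra.
  - assert (D / INR N * path_expect m mu P (S N) (fun p => switches (fun n => nth n p 0%nat) N)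
            <= D * t).
    { apply Rle_trans with (D / INR N * (INR N * t)); [apply Rmult_le_compat_l; auto|].
      right. field. lra. }
    lra.
Qed.

Lemma error_eventually_small : forall gamma D eps, 0 < gamma -> 0 <= D -> 0 < eps ->
  exists N0, (1 <= N0)%nat /\ forall N, (N0 <= N)%nat ->
    eps / 4 + D / INR N + D * Rpower (INR N) (- gamma) < eps.
Proof.
  intros gamma D eps Hg HD He.
  destruct (INR_unbounded (4 * D / eps)) as [N1 HN1].
  destruct (Rpower_neg_eventually_le gamma (eps / (4 * (D + 1)))) as [N2 HN2];
    [lra | apply Rdiv_lt_0_compat; lra|].
  exists (N1 + N2 + 1)%nat. split; [lia|]. intros N HN.
  assert (INR N1 <= INR N) by (apply le_INR; lia).
  assert (HNpos : 0 < INR N) by (apply lt_0_INR; lia).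
  assert (HDN : D / INR N < eps / 4).
  { apply Rmult_lt_reg_r with (INR N); auto.
    replace (D / INR N * INR N) with D by (field; lra).
    assert (4 * D / eps * eps = 4 * D) by (field; lra). nra. }
  assert (Ht := HN2 N ltac:(lia)).
  assert (HDt : D * Rpower (INR N) (- gamma) <= eps / 4).
  { apply Rle_trans with ((D + 1) * (eps / (4 * (D + 1)))); [|right; field; lra].
    assert (Hpos := Rpower_neg_bounds gamma N Hg ltac:(lia)). nra. }
  lra.
Qed.

Theorem mainTheorem6
  (L : R -> R) (alpha : R)
  (Halpha : 0 <= alpha)
  (HL : slowly_varying L)
  (HK : infinite_sum (fun n => Kfun L alpha (S n)) 1)
  (F : R -> R)
  (HF : forall h : R,
        Un_cv (fun N => ln (Zhom (Kfun L alpha) h N) / INR N) (F h))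
  (m : nat) (Hm : (0 < m)%nat)
  (x : nat -> R)
  (Hx : forall i j, (i < m)%nat -> (j < m)%nat -> x i = x j -> i = j)
  (Q : nat -> nat -> R)
  (HQ : stochastic m Q) (HQirr : irreducible m Q)
  (mu : nat -> R) (Hmu : invariant_distribution m Q mu)
  (gamma : R) (Hgamma : 0 < gamma < 1)
  (beta h : R) (Hbeta : 0 <= beta) :
  Un_cv
    (fun N => markov_expect m x mu (QN Q gamma N) N
                (fun omega => ln (Z_N (Kfun L alpha) beta h omega N) / INR N))
    (sumn m (fun i => mu i * F (h + beta * x i))).
Proof.
  intros eps Heps.
  set (K := Kfun L alpha). set (c := fun i => beta * x i + h).
  assert (HKpos : Kpos K) by (apply Kfun_pos; auto).
  destruct (ln_Zpart_pathwise K HKpos HK F c m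
              (fun i _ => free_energy_nonneg L alpha HL (c i) (F (c i)) (HF (c i)))
              (fun i _ => HF (c i)) (eps / 4) ltac:(lra)) as [D [HD Hpath]].
  destruct (error_eventually_small gamma D eps (proj1 Hgamma) HD Heps) as [N0 [HN0 Hsmall]].
  exists N0. intros N HN.
  replace (sumn m (fun i => mu i * F (h + beta * x i))) with (sumn m (fun i => mu i * F (c i)))
    by (apply sumn_ext; intros; unfold c; rewrite Rplus_comm; reflexivity).
  eapply Rle_lt_trans; [|exact (Hsmall N HN)].
  exact (path_expect_average_close m mu (QN Q gamma N) Hm
    (QN_stochastic m Q HQ gamma N (proj1 Hgamma) ltac:(lia)) (QN_invariant m Q mu gamma N Hmu)
    (fun i => F (c i)) (fun q => ln (Zpart K (fun n => c (q n)) N)) N _ (eps / 4) D ltac:(lia) HD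
    (QN_switch_le m Q HQ gamma N (proj1 Hgamma) ltac:(lia))
    (fun q Hq => Hpath q Hq N ltac:(lia))).
Qed.
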